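(* Let $R$ be the ring of integers of a finite extension of $\mathbb Q_p$, let $\nu\in\Lambda^{\mathrm{dig}}_{R,1}$, and let $f_\nu(T)\in R[[T]]$ be the Amice transform of $d_{\infty,1}(\nu)$. Then: (1) $\nu(\mathbf 1)$ is a unit of $R$ if and only if $\mu(f_\nu)=\lambda(f_\nu)=0$; (2) $\nu(\mathbf 1)$ is not a unit of $R$ and $D\nu$ is a unit of $R$ if and only if $\mu(f_\nu)=0$ and $\lambda(f_\nu)=1$.
   Context: $\Lambda^{\mathrm{dig}}_{R,1}=\varprojlim_nR[(\mathbb Z/p)^n]$ is the algebra of $R$-valued measures on $(\mathbb Z/p)^{\mathbb N}$. The digit map $d_{\infty,1}:(\mathbb Z/p)^{\mathbb N}\to\mathbb Z_p$, $(a_i)\mapsto\sum_{i\ge1}\tilde a_ip^{i-1}$ ($\tilde a_i\in\{0,\ldots,p-1\}$), induces by pushforward an $R$-module isomorphism $\Lambda^{\mathrm{dig}}_{R,1}\to R[[\mathbb Z_p]]$. The Amice transform sends $\mu\in R[[\mathbb Z_p]]$ to $\sum_{k\ge0}\mu(\binom{x}{k})T^k$. $\nu(\mathbf 1)$ is the total mass of $\nu$; $D\nu=\sum_{a=1}^{p}a\,\nu(\mathbf 1_{\pi_1^{-1}\{a\}})$ where $\pi_1$ is projection to the first factor $\mathbb Z/p$. Weierstrass invariants: with $\pi$ a uniformizer of $R$, a nonzero $f\in R[[T]]$ factors uniquely as $\pi^{\mu(f)}g(T)u(T)$ with $u\in R[[T]]^\times$ and $g$ monic of degree $\lambda(f)$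 with non-leading coefficients in $(\pi)$; for $f=0$, $\mu(f)=\infty$, $\lambda(f)=0$. *)

From HB Require Import structures.
From mathcomp Require Import all_boot all_order all_algebra.
Set Implicit Arguments. Unset Strict Implicit. Unset Printing Implicit Defensive.
Import Order.TTheory GRing.Theory Num.Theory.
Local Open Scope ring_scope.

Definition dvdr (R : comNzRingType) (a b : R) : Prop := exists c, b = a * c.

Definition pi_lim (R : comNzRingType) (pi : R) (s : nat -> R) (l : R) : Prop :=
  forall m : nat, exists N : nat, forall n : nat, (N <= n)%N -> dvdr (pi ^+ m) (s n - l).

(* [padic_int_ring p pi] : R is the ring of integers of a finite extension of
   Q_p and pi is a uniformizer of R.  Concretely: R is a discrete valuation ring
   with uniformizer pi, of characteristic 0, complete for the pi-adic topology,
   with finite residue field R/(pi) of characteristic p.  (By the Cohen structure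
   theorem these are exactly the rings of integers of finite extensions of Q_p.) *)
Definition padic_int_ring (p : nat) (R : idomainType) (pi : R) : Prop :=
  [/\ pi != 0, pi \isn't a GRing.unit &
      (forall x : R, x != 0 -> exists (v : nat) (u : R), u \is a GRing.unit /\ x = pi ^+ v * u)] /\
    [/\ (forall n : nat, (n%:R : R) = 0 -> n = 0%N),
      dvdr pi p%:R,
      (exists s : seq R, forall x : R, exists2 r, r \in s & dvdr pi (x - r))
    & (forall s : nat -> R,
         (forall m : nat, exists N : nat, forall n : nat, (N <= n)%N -> dvdr (pi ^+ m) (s n - s N)) ->
         exists l : R, pi_lim pi s l)].

(* An element of R[(Z/p)^n] is a function (Z/p)^n -> R (coefficient of each group
   element); the family is compatible with the projections
   (Z/p)^{n+1} -> (Z/p)^n forgetting the last coordinate. *)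
Definition dig_measure (p : nat) (R : comNzRingType) (nu : forall n : nat, n.-tuple 'I_p -> R) : Prop :=
  forall (n : nat) (a : n.-tuple 'I_p), nu n a = \sum_(b : 'I_p) nu n.+1 (rcons_tuple a b).

Definition total_mass (p : nat) (R : comNzRingType) (nu : forall n : nat, n.-tuple 'I_p -> R) : R :=
  nu 0%N [tuple].

(* D nu = sum_{a=1}^{p} a * nu(1_{pi_1^{-1}{a}}), classes of Z/p represented by 1..p *)
Definition Dop (p : nat) (R : comNzRingType) (nu : forall n : nat, n.-tuple 'I_p -> R) : R :=
  \sum_(b : 'I_p) (if nat_of_ord b == 0%N then p else nat_of_ord b)%:R * nu 1%N [tuple b].

Definition digit_val (p n : nat) (a : n.-tuple 'I_p) : nat :=
  \sum_(i < n) nat_of_ord (tnth a i) * p ^ i.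

(* pushforward d_{infty,1}(nu) : its value on the ball c + p^n Z_p (0 <= c < p^n) *)
Definition dig_push (p : nat) (R : comNzRingType) (nu : forall n : nat, n.-tuple 'I_p -> R)
  (n c : nat) : R :=
  \sum_(a : n.-tuple 'I_p | digit_val a == c) nu n a.

(* Riemann sums for mu(binom(x,k)), mu a measure on Z_p given on balls *)
Definition binom_riemann (p : nat) (R : comNzRingType) (mu : nat -> nat -> R) (k n : nat) : R :=
  \sum_(c < p ^ n) mu n c * ('C(c, k))%:R.

(* f is the Amice transform of d_{infty,1}(nu):
   f_k = d_{infty,1}(nu)(binom(x,k)) (pi-adic limit of Riemann sums) *)
Definition amice_dig (p : nat) (R : comNzRingType) (pi : R)
  (nu : forall n : nat, n.-tuple 'I_p -> R) (f : nat -> R) : Prop :=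
  forall k : nat, pi_lim pi (binom_riemann p (dig_push nu) k) (f k).

Definition ps_mul (R : comNzRingType) (f g : nat -> R) (n : nat) : R :=
  \sum_(i < n.+1) f i * g (n - i)%N.

Definition ps_one (R : comNzRingType) (n : nat) : R := (n == 0%N)%:R.

Definition ps_unit (R : comNzRingType) (u : nat -> R) : Prop :=
  exists v : nat -> R, forall n, ps_mul u v n = ps_one R n.

Definition distinguished (R : comNzRingType) (pi : R) (g : nat -> R) (lam : nat) : Prop :=
  [/\ g lam = 1, (forall i, (lam < i)%N -> g i = 0) & (forall i, (i < lam)%N -> dvdr pi (g i))].

(* Weierstrass invariants: mu = Some m (m finite) or None (= infinity) *)
Definition weierstrass_invariants (R : comNzRingType) (pi : R) (f : nat -> R)
  (mu : option nat) (lam : nat) : Prop :=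
  ((forall n, f n = 0) /\ mu = None /\ lam = 0%N) \/
  ((exists n, f n != 0) /\ exists m : nat, mu = Some m /\
     exists (g u : nat -> R), [/\ distinguished pi g lam, ps_unit u &
                                 forall n, f n = pi ^+ m * ps_mul g u n]).

(* The Amice transform f of d(nu) has f(0) = nu(1) exactly and f'(0) congruent
   to D nu modulo p: the Riemann sum of binom(x, 1) at level n is the
   first-digit moment plus p times a correction, and D nu differs from the same
   moment only through the representative p of the class 0.  In a discrete
   valuation ring, units are exactly the elements not divisible by pi, so units
   are detected modulo pi.  Finally, writing f = pi^mu g u with g distinguished
   of degree lambda and u a unit power series, f(0) is a unit iff
   mu = lambda = 0, and f(0) is a non-unit with f'(0) a unit iff mu = 0 and
   lambda = 1. *)
From HB Require Import structures.
From mathcomp Require Import all_boot all_order all_algebra.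
From mathcomp Require Import zify ring.
Import Order.TTheory GRing.Theory Num.Theory.
Set Implicit Arguments. Unset Strict Implicit.
Local Open Scope ring_scope.

Section Divisibility.
Variables (R : comNzRingType) (d : R).

Lemma dvdrr : dvdr d d.
Proof. by exists 1; rewrite mulr1. Qed.

Lemma dvdr0 : dvdr d 0.
Proof. by exists 0; rewrite mulr0. Qed.

Lemma dvdrD a b : dvdr d a -> dvdr d b -> dvdr d (a + b).
Proof. by move=> [c ->] [e ->]; exists (c + e); rewrite mulrDr. Qed.

Lemma dvdrN a : dvdr d a -> dvdr d (- a).
Proof. by move=> [c ->]; exists (- c); rewrite mulrN. Qed.

Lemma dvdrB a b : dvdr d a -> dvdr d b -> dvdr d (a - b).
Proof. by move=> ha hb; apply: dvdrD => //; apply: dvdrN. Qed.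

Lemma dvdr_mulr a b : dvdr d a -> dvdr d (a * b).
Proof. by move=> [c ->]; exists (c * b); rewrite mulrA. Qed.

Lemma dvdr_trans e a : dvdr d e -> dvdr e a -> dvdr d a.
Proof. by move=> hde [c ->]; apply: dvdr_mulr. Qed.

Lemma dvdr_exp m a : (0 < m)%N -> dvdr d (d ^+ m * a).
Proof. by case: m => // m _; rewrite exprS -mulrA; apply/dvdr_mulr/dvdrr. Qed.

Lemma pi_lim_dvdr (s : nat -> R) l : pi_lim d s l ->
  exists N, forall n, (N <= n)%N -> dvdr d (s n - l).
Proof. by move=> /(_ 1%N) [N hN]; exists N; rewrite -[d]expr1. Qed.

End Divisibility.

Section PowerSeriesCoefficients.
Variable R : comUnitRingType.
Implicit Types f g u : nat -> R.

Lemma ps_mul0 f g : ps_mul f g 0 = f 0%N * g 0%N.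
Proof. by rewrite /ps_mul big_ord1. Qed.

Lemma ps_mul1 f g : ps_mul f g 1 = f 0%N * g 1%N + f 1%N * g 0%N.
Proof. by rewrite /ps_mul big_ord_recl big_ord1. Qed.

Lemma ps_unit_coef0 u : ps_unit u -> u 0%N \is a GRing.unit.
Proof.
move=> [v /(_ 0%N)]; rewrite ps_mul0 /ps_one /= => uv1.
have : u 0%N * v 0%N \is a GRing.unit by rewrite uv1 unitr1.
by rewrite unitrM => /andP[].
Qed.

End PowerSeriesCoefficients.

Section UnitsModUniformizer.
Variables (R : comUnitRingType) (pi : R).
Hypothesis pi_nonunit : pi \isn't a GRing.unit.
Hypothesis pi_factor : forall x : R, x != 0 ->
  exists (v : nat) (u : R), u \is a GRing.unit /\ x = pi ^+ v * u.

Lemma unitrE_ndvdr x : x \is a GRing.unit <-> ~ dvdr pi x.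
Proof.
split.
  move=> ux [c hc]; move: ux; rewrite hc unitrM => /andP[hpi _].
  by move: pi_nonunit; rewrite hpi.
move=> hn; have [x0|x0] := eqVneq x 0; first by case: hn; rewrite x0; apply: dvdr0.
have [[|v] [u [hu hx]]] := pi_factor x0; first by rewrite hx expr0 mul1r.
by case: hn; rewrite hx; apply: dvdr_exp.
Qed.

Lemma dvdr_nonunit x : dvdr pi x -> x \isn't a GRing.unit.
Proof. by move=> h; apply/negP => /unitrE_ndvdr. Qed.

Lemma unitr_congr x y : dvdr pi (x - y) ->
  x \is a GRing.unit = (y \is a GRing.unit).
Proof.
move=> h; apply/idP/idP => /unitrE_ndvdr hn; apply/unitrE_ndvdr => hd; apply: hn.
  by rewrite -(subrK y x); apply: dvdrD.
by rewrite -[y](subKr x); apply: dvdrB.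
Qed.

Variables (f : nat -> R) (mu : option nat) (lam : nat).

Lemma weierstrass_coef0_unit : weierstrass_invariants pi f mu lam ->
  f 0%N \is a GRing.unit <-> mu = Some 0%N /\ lam = 0%N.
Proof.
case=> [[f0 [-> _]] | [_ [m [-> [g [u [[g1 _ g_dvd] u_unit f_eq]]]]]]].
  by split=> [|[]//]; rewrite f0 (negPf (dvdr_nonunit (dvdr0 _))).
rewrite f_eq ps_mul0; split=> [/unitrE_ndvdr f0_unit | [[->] lam0]]; last first.
  by move: g1; rewrite lam0 => ->; rewrite expr0 !mul1r; apply: ps_unit_coef0.
case: m f_eq f0_unit => [|m] _ f0_unit; last by case: f0_unit; apply: dvdr_exp.
case: lam g1 g_dvd => [//|l] _ g_dvd.
by case: f0_unit; rewrite expr0 mul1r; apply/dvdr_mulr/g_dvd.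
Qed.

Lemma weierstrass_coef1_unit : weierstrass_invariants pi f mu lam ->
  (f 0%N \isn't a GRing.unit /\ f 1%N \is a GRing.unit) <->
  mu = Some 0%N /\ lam = 1%N.
Proof.
case=> [[f0 [-> _]] | [_ [m [-> [g [u [[g1 _ g_dvd] u_unit f_eq]]]]]]].
  by split=> [[_]|[]//]; rewrite f0 (negPf (dvdr_nonunit (dvdr0 _))).
have u0 := ps_unit_coef0 u_unit.
rewrite !f_eq ps_mul0 ps_mul1.
split=> [[f0_nonunit /unitrE_ndvdr f1_unit] | [[->] lam1]].
  case: m f_eq f0_nonunit f1_unit => [|m] _ f0_nonunit f1_unit; last first.
    by case: f1_unit; apply: dvdr_exp.
  rewrite expr0 !mul1r in f0_nonunit f1_unit.
  case: lam g1 g_dvd => [|[|l]] g1 g_dvd //.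
    by move: f0_nonunit; rewrite g1 mul1r u0.
  by case: f1_unit; apply: dvdrD; apply/dvdr_mulr/g_dvd.
move: g1 g_dvd; rewrite lam1 => -> g_dvd; rewrite expr0 !mul1r.
split; first by apply/dvdr_nonunit/dvdr_mulr/g_dvd.
apply/unitrE_ndvdr => hd; move/unitrE_ndvdr: u0; apply.
by have := dvdrB hd (dvdr_mulr (u 1%N) (g_dvd 0%N isT)); rewrite addrC addKr.
Qed.

End UnitsModUniformizer.

Lemma big_tuple0 (R : comNzRingType) (T : finType) (F : 0.-tuple T -> R) :
  \sum_(a : 0.-tuple T) F a = F [tuple].
Proof. by rewrite (big_pred1 [tuple]) // => t; apply/esym/eqP/tuple0. Qed.

Lemma big_tuple_rcons (R : comNzRingType) (T : finType) (m : nat)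
    (F : m.+1.-tuple T -> R) :
  \sum_(a : m.+1.-tuple T) F a =
  \sum_(a : m.-tuple T) \sum_(b : T) F (rcons_tuple a b).
Proof.
rewrite pair_big /= (reindex (fun ab : m.-tuple T * T => rcons_tuple ab.1 ab.2)) //=.
exists (fun t : m.+1.-tuple T =>
  ([tuple of belast (thead t) (behead t)], last (thead t) (behead t))).
  move=> [[[|x s] Ha] b] _; congr pair; rewrite /= ?last_rcons //.
  1,2: by apply: val_inj; rewrite /= ?belast_rcons.
by move=> t _; apply: val_inj; rewrite /= -lastI; case: t => [[|x s] Hs].
Qed.

Lemma digit_sum_lt (p n : nat) (c : 'I_n -> nat) : (forall i, c i < p)%N ->
  (\sum_(i < n) c i * p ^ i < p ^ n)%N.
Proof.
elim: n c => [|n IH] c c_lt; first by rewrite big_ord0 expn0.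
rewrite big_ord_recr /= expnS.
have := IH (fun i => c (widen_ord (leqnSn n) i)) (fun i => c_lt _).
set low := (\sum_(i < n) _)%N; have := c_lt ord_max; nia.
Qed.

Lemma digit_val_head (p n : nat) (a : n.+1.-tuple 'I_p) : digit_val a =
  (tnth a ord0 + p * \sum_(i < n) tnth a (lift ord0 i) * p ^ i)%N.
Proof.
rewrite /digit_val big_ord_recl expn0 muln1 big_distrr; congr addn.
by apply: eq_bigr => i _ /=; rewrite expnS mulnCA.
Qed.

Section DigitMeasure.
Variables (p : nat) (R : comNzRingType) (nu : forall n : nat, n.-tuple 'I_p -> R).
Arguments nu : clear implicits.
Hypothesis hnu : dig_measure nu.

Definition first_digit_moment : R :=
  \sum_(b : 'I_p) nu 1%N [tuple b] * (b : nat)%:R.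

Lemma dig_measure_mass n : \sum_(a : n.-tuple 'I_p) nu n a = total_mass nu.
Proof.
elim: n => [|n IH]; first by rewrite big_tuple0.
by rewrite big_tuple_rcons -IH; apply: eq_bigr => a _; rewrite hnu.
Qed.

Lemma dig_measure_first_moment n :
  \sum_(a : n.+1.-tuple 'I_p) nu n.+1 a * (tnth a ord0 : nat)%:R = first_digit_moment.
Proof.
elim: n => [|n IH].
  rewrite big_tuple_rcons big_tuple0; apply: eq_bigr => b _.
  by congr (nu 1%N _ * _); apply: val_inj.
rewrite big_tuple_rcons -IH; apply: eq_bigr => a _.
rewrite hnu big_distrl; apply: eq_bigr => b _; congr (_ * (nat_of_ord _)%:R).
rewrite [LHS](tnth_nth (tnth a ord0)) [RHS](tnth_nth (tnth a ord0)) /=.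
by rewrite nth_rcons size_tuple.
Qed.

Lemma binom_riemann_dig_push k n : binom_riemann p (dig_push nu) k n =
  \sum_(a : n.-tuple 'I_p) nu n a * ('C(digit_val a, k))%:R.
Proof.
rewrite /binom_riemann /dig_push.
under eq_bigr do rewrite big_distrl.
rewrite (exchange_big_dep xpredT) //=; apply: eq_bigr => a _.
have lt_a : (digit_val a < p ^ n)%N by apply: digit_sum_lt => i; apply: ltn_ord.
by rewrite (big_pred1 (Ordinal lt_a)).
Qed.

Lemma binom_riemann0 n : binom_riemann p (dig_push nu) 0 n = total_mass nu.
Proof.
by rewrite binom_riemann_dig_push; under eq_bigr do rewrite bin0 mulr1;
  rewrite dig_measure_mass.
Qed.

Lemma binom_riemann1_congr n :
  dvdr p%:R (binom_riemann p (dig_push nu) 1 n.+1 - first_digit_moment).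
Proof.
rewrite binom_riemann_dig_push.
under eq_bigr do rewrite bin1 digit_val_head natrD natrM mulrDr.
rewrite big_split /= dig_measure_first_moment addrAC subrr add0r.
exists (\sum_(a : n.+1.-tuple 'I_p)
          nu n.+1 a * ((\sum_(i < n) tnth a (lift ord0 i) * p ^ i)%N)%:R).
by rewrite big_distrr; apply: eq_bigr => a _ /=; rewrite mulrCA.
Qed.

End DigitMeasure.

(* [Dop] weights the class 0 by p instead of 0. *)
Lemma Dop_congr (p : nat) (R : comNzRingType) (nu : forall n, n.-tuple 'I_p -> R) :
  dvdr p%:R (Dop nu - first_digit_moment nu).
Proof.
exists (\sum_(b : 'I_p) if (b : nat) == 0%N then nu 1%N [tuple b] else 0).
rewrite /Dop -sumrB big_distrr; apply: eq_bigr => b _ /=.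
case: eqP => [->|_]; first by rewrite mulr0n mulr0 subr0.
by rewrite mulrC subrr mulr0.
Qed.

Section AmiceLowCoefficients.
Variables (p : nat) (R : comNzRingType) (pi : R).
Variables (nu : forall n : nat, n.-tuple 'I_p -> R) (f : nat -> R).
Hypotheses (hnu : dig_measure nu) (hf : amice_dig pi nu f).

Lemma amice_dig_coef0 : dvdr pi (total_mass nu - f 0%N).
Proof.
by have [N /(_ N (leqnn N))] := pi_lim_dvdr (hf 0%N); rewrite binom_riemann0.
Qed.

Lemma amice_dig_coef1 : dvdr pi p%:R -> dvdr pi (Dop nu - f 1%N).
Proof.
move=> pi_dvd_p; have [N /(_ N.+1 (leqnSn N))] := pi_lim_dvdr (hf 1%N).
set S := binom_riemann _ _ _ _ => S_f1.
have -> : Dop nu - f 1%N =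
  (Dop nu - first_digit_moment nu) - (S - first_digit_moment nu) + (S - f 1%N).
  by ring.
apply/dvdrD/S_f1/dvdrB; apply: dvdr_trans pi_dvd_p _.
  exact: Dop_congr.
exact: binom_riemann1_congr.
Qed.

End AmiceLowCoefficients.

Theorem corollary4p2 (p : nat) (R : idomainType) (pi : R)
  (hp : prime p) (hR : padic_int_ring p pi)
  (nu : forall n : nat, n.-tuple 'I_p -> R) (hnu : dig_measure nu)
  (f : nat -> R) (hf : amice_dig pi nu f)
  (mu : option nat) (lam : nat) (hW : weierstrass_invariants pi f mu lam) :
  (total_mass nu \is a GRing.unit <-> mu = Some 0%N /\ lam = 0%N) /\
  ((total_mass nu \isn't a GRing.unit /\ Dop nu \is a GRing.unit)
     <-> mu = Some 0%N /\ lam = 1%N).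
Proof.
case: hR => [[_ pi_nonunit pi_factor] [_ pi_dvd_p _ _]].
have unit_modpi := unitr_congr pi_nonunit pi_factor.
rewrite (unit_modpi _ _ (amice_dig_coef0 hnu hf)).
rewrite (unit_modpi _ _ (amice_dig_coef1 hnu hf pi_dvd_p)).
exact: conj (weierstrass_coef0_unit pi_nonunit pi_factor hW)
            (weierstrass_coef1_unit pi_nonunit pi_factor hW).
Qed.
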